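(* Let $H$ be a finite group of odd order such that $d(\mathbb{Z}_2\times H)=2$. Then $\mathsf{GEN}(\mathbb{Z}_2\times H)=*0$.
   Context: For a finite group $G$, $\mathsf{GEN}(G)$ is the following impartial two-player game. A position is a set of elements selected so far; the starting position is $\emptyset$. From a position $P$ with $\langle P\rangle\neq G$, the player to move selects some $g\in G\setminus P$, producing the position $P\cup\{g\}$ (these are the options of $P$); a position $P$ with $\langle P\rangle = G$ has no options. The nim-number of a position is defined recursively by $\operatorname{nim}(P)=\operatorname{mex}\{\operatorname{nim}(Q): Q \text{ an option of } P\}$, where $\operatorname{mex}(A)$ is the least nonnegative integer not in $A$. We write $\mathsf{GEN}(G)=*n$ if $\operatorname{nim}(\emptyset)=n$. $d(G)$ denotes the minimum size of a generating set of $G$; $\mathbb{Z}_2$ is the cyclic group of order $2$. *)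

From mathcomp Require Import all_boot all_fingroup all_algebra.
Set Implicit Arguments. Unset Strict Implicit. Unset Printing Implicit Defensive.
Local Open Scope group_scope.

Definition mex (s : seq nat) : nat := find (fun k => k \notin s) (iota 0 (size s).+1).

Section Gen.
Variable gT : finGroupType.
Variable G : {set gT}.

(* d(G): minimum size of a generating set of G (G itself generates G) *)
Definition dgen : nat :=
  \big[minn/#|G|]_(A : {set gT} | (A \subset G) && (<<A>> == G)) #|A|.

Fixpoint nim_fuel (n : nat) (P : {set gT}) : nat :=
  match n with
  | 0 => 0
  | n'.+1 => if <<P>> == G then 0
             else mex [seq nim_fuel n' (g |: P) | g <- enum (G :\: P)]
  end.

(* enough fuel: every play from P (a subset of G) lasts at most #|G| - #|P| moves *)
Definition nim (P : {set gT}) : nat := nim_fuel (#|G| - #|P|).+1 P.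

(* GEN(G) = *n  iff  nim_GEN G = n *)
Definition nim_GEN : nat := nim set0.
End Gen.

From mathcomp Require Import all_boot all_order all_fingroup all_algebra.
From mathcomp Require Import cyclic zify.
Set Implicit Arguments. Unset Strict Implicit. Unset Printing Implicit Defensive.
Local Open Scope group_scope.
Import Order.TTheory.

(* Let tau = (1, 1) be the central involution of Z_2 x H.  The second player
   maintains two properties of the position P: it is closed under x |-> x tau,
   and no single element of H generates H together with the H-coordinates of P.
   The empty position has them because H is not cyclic (d(Z_2 x H) = 2).  If the
   opponent's move g preserves the second property, the answer g tau restores the
   first one without changing the H-coordinates.  Otherwise some k in H generates
   H together with the H-coordinates, and the answer (1, k) generates Z_2 x H and
   ends the game: since |H| is odd, an odd power of (1, k) is tau. *)

Lemma mex_eq0 (s : seq nat) : (mex s == 0%N) = (0%N \notin s).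
Proof. by rewrite /mex /=; case: ifP. Qed.

Lemma dgen_le_card (gT : finGroupType) (G A : {set gT}) :
  A \subset G -> <<A>> = G -> (dgen G <= #|A|)%N.
Proof.
move=> sAG genA.
by apply: (@bigmin_le_cond _ nat _ #|G|); rewrite sAG genA eqxx.
Qed.

Section NimTheory.
Variables (gT : finGroupType) (G : {set gT}).

Lemma nim_generating (P : {set gT}) : <<P>> = G -> nim G P = 0%N.
Proof. by move=> genP; rewrite /nim /= genP eqxx. Qed.

Lemma nim_unfold (P : {set gT}) : P \subset G -> <<P>> != G ->
  nim G P = mex [seq nim G (g |: P) | g <- enum (G :\: P)].
Proof.
move=> sPG ngenP; rewrite /nim /= (negbTE ngenP); congr mex.
apply/eq_in_map => g; rewrite mem_enum inE => /andP[gP gG].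
have cardQ : #|g |: P| = #|P|.+1 by rewrite cardsU1 gP.
have : (#|g |: P| <= #|G|)%N by apply: subset_leq_card; rewrite subUset sub1set gG.
rewrite /nim cardQ => leQG.
by have -> : (#|G| - #|P| = (#|G| - #|P|.+1).+1)%N by lia.
Qed.

Lemma nim_eq0_of_invariant (W : {set gT} -> Prop) :
  (forall (P : {set gT}) (g : gT), P \subset G -> W P -> g \in G :\: P ->
     <<g |: P>> != G /\
     exists2 h, h \in G :\: (g |: P) & W (h |: (g |: P)) \/ <<h |: (g |: P)>> = G) ->
  forall P : {set gT}, P \subset G -> W P -> nim G P = 0%N.
Proof.
move=> reply P; have [n] := ubnP (#|G| - #|P|).
elim: n P => // n IH P ltPn sPG WP.
have [genP | ngenP] := eqVneq <<P>> G; first exact: nim_generating.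
rewrite nim_unfold //; apply/eqP; rewrite mex_eq0.
apply/mapP => -[g]; rewrite mem_enum => gGP /esym/eqP; apply/negP.
have [ngenQ [h hGQ Wh]] := reply P g sPG WP gGP.
move: gGP hGQ; rewrite !inE negb_or => /andP[gP gG] /andP[/andP[hg hP] hG].
have sQG : g |: P \subset G by rewrite subUset sub1set gG.
rewrite nim_unfold // mex_eq0 negbK; apply/mapP; exists h.
  by rewrite mem_enum !inE negb_or hg hP hG.
case: Wh => [Wh | genR]; last by rewrite nim_generating.
apply/esym/IH => //; last by rewrite subUset sub1set hG.
have : (#|h |: (g |: P)| <= #|G|)%N.
  by apply: subset_leq_card; rewrite !subUset !sub1set hG gG.
rewrite !cardsU1 !inE negb_or hg hP gP; lia.
Qed.

End NimTheory.

Lemma gen_imset_snd (aT bT : finGroupType) (P : {set aT * bT}) :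
  <<[set x.2 | x in P]>> = snd @* <<P>>.
Proof. by rewrite morphim_gen ?subsetT // morphimEsub ?subsetT. Qed.

Lemma pairX (aT bT : finGroupType) (x : aT * bT) n : x ^+ n = (x.1 ^+ n, x.2 ^+ n).
Proof. by case: x => a b; elim: n => // n IH; rewrite !expgS IH. Qed.

Section Z2xOdd.
Variables (hT : finGroupType) (H : {group hT}).

Local Notation G := (setX (Zp 2) H).
Local Notation pr2 P := [set x.2 | x in P].

Definition tau : 'Z_2 * hT := (Zp1, 1).

Lemma mem_Z2X (x : 'Z_2 * hT) : (x \in G) = (x.2 \in H).
Proof. by case: x => a h; rewrite in_setX mem_Zp. Qed.

Lemma pr2_Z2X : pr2 G = H.
Proof. by rewrite -[RHS](morphim_sndX [group of Zp 2]) morphimEsub ?subsetT. Qed.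

Lemma gen_pr2 (P : {set 'Z_2 * hT}) : <<P>> = G -> <<pr2 P>> = H.
Proof. by rewrite gen_imset_snd => ->; rewrite morphimEsub ?subsetT // pr2_Z2X. Qed.

Hypothesis oddH : odd #|H|.

Lemma tau_in_gen (R : {set 'Z_2 * hT}) (z : 'Z_2 * hT) :
  z \in R -> z.1 = Zp1 -> z.2 \in H -> tau \in <<R>>.
Proof.
move=> zR z1 z2H; have odd_z2 : odd #[z.2] by apply: dvdn_odd oddH; apply: order_dvdG.
have -> : tau = z ^+ #[z.2].
  by rewrite pairX expg_order z1 -expg_mod_order order_Zp1 modn2 odd_z2 expg1.
by rewrite groupX ?mem_gen.
Qed.

Lemma Z2X_gen (R : {set 'Z_2 * hT}) (z : 'Z_2 * hT) :
  R \subset G -> z \in R -> z.1 = Zp1 -> <<pr2 R>> = H -> <<R>> = G.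
Proof.
move=> sRG zR z1 genH.
have z2H : z.2 \in H by rewrite -mem_Z2X (subsetP sRG).
have tauR := tau_in_gen zR z1 z2H.
apply/eqP; rewrite eqEsubset gen_subG sRG /=; apply/subsetP => -[b h].
rewrite mem_Z2X /= => hH; have : h \in snd @* <<R>> by rewrite -gen_imset_snd genH.
case/morphimP => x _ xR /= ->.
have -> : (b, x.2) = tau ^+ (b * x.1^-1)%g * x.
  rewrite pairX Zp1_expgz expg1n; case: x {xR} => a c /=.
  by congr (_, _); rewrite /= ?mulgKV ?mul1g.
by rewrite groupM ?groupX.
Qed.

Definition tau_closed (P : {set 'Z_2 * hT}) := {in P, forall x, x * tau \in P}.

Definition safe (P : {set 'Z_2 * hT}) := [forall k in H, <<k |: pr2 P>> != H].

Lemma tau_neq (x : 'Z_2 * hT) : x * tau != x.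
Proof.
by case: x => a h; apply/eqP => /(congr1 fst) /=; rewrite -{2}[a]mulg1 => /mulgI /eqP.
Qed.

Lemma tau_involutive : tau * tau = 1.
Proof. by congr (_, _); [apply/val_inj | apply: mulg1]. Qed.

Lemma safe_option_nongen (P : {set 'Z_2 * hT}) (g : 'Z_2 * hT) :
  safe P -> <<g |: P>> != G.
Proof.
move=> safeP; apply/eqP => genQ.
have g2H : g.2 \in H by rewrite -mem_Z2X -genQ mem_gen ?setU11.
by move/forall_inP: safeP => /(_ _ g2H); rewrite -imsetU1 gen_pr2 ?eqxx.
Qed.

Lemma pairing_reply (P : {set 'Z_2 * hT}) (g : 'Z_2 * hT) :
  tau_closed P -> g \in G :\: P ->
  [/\ g * tau \in G :\: (g |: P), tau_closed (g * tau |: (g |: P))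
    & pr2 (g * tau |: (g |: P)) = pr2 (g |: P)].
Proof.
move=> tauP; rewrite inE => /andP[gP gG]; split.
- rewrite in_setD in_setU1 negb_or tau_neq groupM ?andbT //; last first.
    by rewrite in_setX mem_Zp ?group1.
  by apply: contra gP => /tauP; rewrite -mulgA tau_involutive mulg1.
- move=> x; rewrite !inE => /or3P[/eqP-> | /eqP-> | xP].
  + by rewrite -mulgA tau_involutive mulg1 eqxx orbT.
  + by rewrite eqxx.
  + by rewrite tauP ?orbT.
- by rewrite imsetU1 /= mulg1; apply/setUidPr; rewrite sub1set imset_f ?setU11.
Qed.

Lemma winning_reply (P : {set 'Z_2 * hT}) (k : hT) :
  P \subset G -> <<P>> != G -> k \in H -> <<k |: pr2 P>> = H ->
  (Zp1, k) \in G :\: P /\ <<(Zp1, k) |: P>> = G.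
Proof.
move=> sPG ngenP kH genH.
have genR : <<(Zp1, k) |: P>> = G.
  by apply: (Z2X_gen _ (setU11 _ _)); rewrite ?imsetU1 // subUset sub1set mem_Z2X kH.
split=> //; rewrite inE mem_Z2X kH andbT; apply: contra ngenP => kP.
by rewrite -genR (setUidPr _) ?sub1set.
Qed.

Lemma Z2X_winning_invariant (P : {set 'Z_2 * hT}) (g : 'Z_2 * hT) :
  P \subset G -> tau_closed P /\ safe P -> g \in G :\: P ->
  <<g |: P>> != G /\
  exists2 h, h \in G :\: (g |: P) &
    (tau_closed (h |: (g |: P)) /\ safe (h |: (g |: P))) \/ <<h |: (g |: P)>> = G.
Proof.
move=> sPG [tauP safeP] gGP; have ngenQ := safe_option_nongen g safeP.
split=> //; have [hGQ tauR pr2R] := pairing_reply tauP gGP.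
have [safeQ | /forall_inPn[k kH /negPn/eqP genH]] := boolP (safe (g |: P)).
  by exists (g * tau) => //; left; rewrite /safe pr2R.
have sQG : g |: P \subset G by rewrite subUset sub1set (setDP gGP).1 sPG.
by have [kGQ genR] := winning_reply sQG ngenQ kH genH; exists (Zp1, k) => //; right.
Qed.

Lemma safe_set0 : (1 < dgen G)%N -> safe set0.
Proof.
move=> dG; apply/forall_inP => k kH; apply/eqP => genH.
have sRG : [set (Zp1, k)] \subset G by rewrite sub1set mem_Z2X.
have genR : <<[set (Zp1, k)]>> = G.
  by apply: (Z2X_gen sRG (set11 _)); rewrite // imset_set1 -genH imset0 setU0.
by have := dgen_le_card sRG genR; rewrite cards1 leqNgt dG.
Qed.

End Z2xOdd.

Theorem proposition4p9 (hT : finGroupType) (H : {group hT}) :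
  odd #|H| -> dgen (setX (Zp 2) H) = 2 -> nim_GEN (setX (Zp 2) H) = 0.
Proof.
move=> oddH d2; apply: (nim_eq0_of_invariant (Z2X_winning_invariant oddH)).
  exact: sub0set.
split; first by move=> x; rewrite inE.
by apply: (safe_set0 oddH); rewrite d2.
Qed.
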